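(* In any quiver, every normal vertex of finite height is phylogenetic.
   Context: A quiver consists of a class of vertices and, for each ordered pair of vertices $(A,B)$, a set of edges $A\to B$ (loops and multiple edges allowed). An evolution of length $m\ge 0$ is a sequence $A_0\leftarrow A_1\leftarrow\cdots\leftarrow A_m$ of vertices together with edges $A_k\to A_{k-1}$ ($1\le k\le m$); $A_0$ is its initial and $A_m$ its terminal vertex. Write $A\le B$ ($A$ is an ancestor of $B$) if there is an evolution with initial vertex $A$ and terminal vertex $B$; $A,B$ are isotypic ($A\sim B$) if $A\le B$ and $B\le A$. A vertex $A$ is primitive if every ancestor of $A$ is isotypic to $A$. A full evolution for $X$ is an evolution with primitive initial vertex and terminal vertex $X$. The height $h(X)$ is the smallest length of a full evolution for $X$ ($\infty$ if none). A vertex $A_k$ ($0\le k<m$) of an evolution $A_0\leftarrow\cdots\leftarrow A_m$ is critical if $h(A_k)<\infty$ and $h(A_{k+1})=h(A_k)+1$. The critical ancestors of a vertex $B$ are the critical vertices of full evolutions terminating at $B$. $B$ is normal if any two critical ancestors of $B$ of equal height are isotypic. An evolution $\alpha=(A_0\leftarrow\cdots\leftarrow A_m)$ embeds in $\beta=(B_0\leftarrow\cdots\leftarrow B_n)$ if $m\le n$ and there are $0\le r_0<\cdots<r_m\le n$ with $A_k\sim B_{r_k}$. A universal evolution for $X$ is a full evolution for $X$ embedding in every full evolution for $X$; $X$ is phylogenetic if one exists. *)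

From Stdlib Require Import Arith List.
Import ListNotations.
Set Implicit Arguments.

Section Quiver.
Variable V : Type.
Variable E : V -> V -> Type.

(* evol X = evolutions A_0 <- A_1 <- ... <- A_m with terminal vertex A_m = X.
   evS e B f extends an evolution e with terminal vertex A by a new terminal
   vertex B together with an edge f : B -> A. *)
Inductive evol : V -> Type :=
| ev0 : forall A : V, evol A
| evS : forall (A : V) (e : evol A) (B : V), E B A -> evol B.
Arguments evS {A} e B _.

Fixpoint len (X : V) (e : evol X) : nat :=
  match e with
  | ev0 _ => 0
  | evS e _ _ => S (len e)
  end.

Fixpoint verts (X : V) (e : evol X) : list V :=
  match e with
  | ev0 A => [A]
  | evS e B _ => verts e ++ [B]
  end.

Fixpoint initial (X : V) (e : evol X) : V :=
  match e with
  | ev0 A => A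
  | evS e _ _ => initial e
  end.

(* the k-th vertex A_k (meaningful for k <= len e) *)
Definition vtx (X : V) (e : evol X) (k : nat) : V := nth k (verts e) X.

Definition ancestor (A B : V) : Prop := exists e : evol B, initial e = A.

Definition isotypic (A B : V) : Prop := ancestor A B /\ ancestor B A.

Definition primitive (A : V) : Prop := forall B, ancestor B A -> isotypic B A.

Definition full (X : V) (e : evol X) : Prop := primitive (initial e).

Definition is_height (X : V) (n : nat) : Prop :=
  (exists e : evol X, full e /\ len e = n) /\
  (forall e : evol X, full e -> n <= len e).

Definition finite_height (X : V) : Prop := exists n, is_height X n.

Definition critical_at (X : V) (e : evol X) (k : nat) : Prop :=
  k < len e /\ exists n, is_height (vtx e k) n /\ is_height (vtx e (S k)) (S n).

Definition critical_ancestor (C B : V) : Prop :=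
  exists (e : evol B) (k : nat), full e /\ critical_at e k /\ vtx e k = C.

Definition normal (B : V) : Prop :=
  forall C D n, critical_ancestor C B -> critical_ancestor D B ->
    is_height C n -> is_height D n -> isotypic C D.

Definition embeds (X Y : V) (a : evol X) (b : evol Y) : Prop :=
  len a <= len b /\
  exists r : nat -> nat,
    (forall k, k < len a -> r k < r (S k)) /\ r (len a) <= len b /\
    (forall k, k <= len a -> isotypic (vtx a k) (vtx b (r k))).

Definition universal (X : V) (a : evol X) : Prop :=
  full a /\ forall b : evol X, full b -> embeds a b.

Definition phylogenetic (X : V) : Prop := exists a : evol X, universal a.

End Quiver.

(* Let alpha be a full evolution for X of minimal length n = h(X). Heights rise
   by at most one along each edge of an evolution, and grafting a shorter full
   evolution onto alpha shows that the k-th vertex of alpha has height exactly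
   k, so every vertex of alpha but the last is critical. Along any other full
   evolution beta for X the heights start at 0, end at n and rise by at most one
   per step, so for each k < n there is a last index r k at which the height is
   k, and the height right after it is k + 1: the vertex of beta at r k is a
   critical ancestor of X of height k. Normality makes it isotypic to the k-th
   vertex of alpha, and r is strictly increasing, so alpha embeds in beta. *)
From Stdlib Require Import Arith List Lia Classical ClassicalEpsilon.

Fixpoint last_le (f : nat -> nat) (k j : nat) : nat :=
  match j with
  | 0 => 0
  | S j' => if f (S j') <=? k then S j' else last_le f k j'
  end.

Lemma last_le_spec (f : nat -> nat) k j : f 0 <= k ->
  last_le f k j <= j /\ f (last_le f k j) <= k /\
  (forall i, i <= j -> f i <= k -> i <= last_le f k j).
Proof.
  intros f0_le; induction j as [|j IH]; simpl.
  - repeat split; [lia | assumption | intros; lia].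
  - destruct (Nat.leb_spec (f (S j)) k) as [le_k | gt_k].
    + repeat split; [lia | assumption | intros; lia].
    + destruct IH as (le_j & f_le & maximal).
      repeat split; [lia | assumption |].
      intros i le_i fi_le.
      destruct (Nat.eq_dec i (S j)) as [-> | ne]; [lia | apply maximal; lia].
Qed.

(* Take for r k the last index at which f is at most k. *)
Lemma last_upcrossings (f : nat -> nat) {m n} :
  f 0 = 0 -> f m = n -> (forall j, j < m -> f (S j) <= S (f j)) ->
  exists r : nat -> nat, r n = m /\
    forall k, k < n -> r k < r (S k) /\ r k < m /\ f (r k) = k /\ f (S (r k)) = S k.
Proof.
  intros f0 fm step.
  set (r k := last_le f k m).
  assert (r_spec : forall k, r k <= m /\ f (r k) <= k /\
                     (forall i, i <= m -> f i <= k -> i <= r k))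
    by (intros k; apply last_le_spec; lia).
  exists r; split.
  - destruct (r_spec n) as (le_m & _ & maximal).
    specialize (maximal m (le_n m) ltac:(lia)); lia.
  - intros k lt_kn.
    destruct (r_spec k) as (le_m & f_le & maximal).
    assert (lt_m : r k < m)
      by (destruct (Nat.eq_dec (r k) m) as [eq_m | ]; [rewrite eq_m in f_le|]; lia).
    assert (f_next : k < f (S (r k))).
    { destruct (Nat.le_gt_cases (f (S (r k))) k) as [le_k | ]; [|assumption].
      specialize (maximal (S (r k)) ltac:(lia) le_k); lia. }
    specialize (step (r k) lt_m).
    destruct (r_spec (S k)) as (_ & _ & maximal').
    specialize (maximal' (S (r k)) ltac:(lia) ltac:(lia)).
    repeat split; lia.
Qed.

Lemma nat_least_witness (P : nat -> Prop) :
  (exists n, P n) -> exists n, P n /\ forall m, P m -> n <= m.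
Proof.
  intros [n Pn]; induction n as [n IH] using lt_wf_ind.
  destruct (classic (exists m, m < n /\ P m)) as [(m & lt_mn & Pm) | no_smaller].
  - exact (IH m lt_mn Pm).
  - exists n; split; [assumption|].
    intros m Pm; destruct (Nat.le_gt_cases n m); [assumption|].
    exfalso; eauto.
Qed.

Section Quiver.
Context {V : Type} {E : V -> V -> Type}.

Lemma length_verts {X} (e : evol E X) : length (verts e) = S (len e).
Proof. induction e; simpl; [reflexivity | rewrite length_app, IHe; simpl; lia]. Qed.

Lemma vtx_len {X} (e : evol E X) : vtx e (len e) = X.
Proof.
  destruct e as [A | A e B f]; unfold vtx; simpl; [reflexivity|].
  rewrite app_nth2; rewrite length_verts; [|lia].
  now rewrite Nat.sub_diag.
Qed.

Lemma vtx_evS {A} (e : evol E A) B (f : E B A) k :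
  k <= len e -> vtx (evS e B f) k = vtx e k.
Proof.
  intros le_k; unfold vtx; simpl.
  rewrite app_nth1 by (rewrite length_verts; lia).
  apply nth_indep; rewrite length_verts; lia.
Qed.

Lemma vtx0 {X} (e : evol E X) : vtx e 0 = initial e.
Proof. induction e; simpl; [reflexivity | rewrite vtx_evS by lia; assumption]. Qed.

Lemma evol_segment {X} (e : evol E X) {j k} : j <= k -> k <= len e ->
  forall {Y}, vtx e k = Y -> exists s : evol E Y, initial s = vtx e j /\ len s = k - j.
Proof.
  revert j k; induction e as [A | A e IH B f]; intros j k le_jk le_k Y vtx_k; simpl in le_k.
  - replace j with 0 in * by lia; replace k with 0 in * by lia.
    subst Y; exists (ev0 E (vtx (ev0 E A) 0)); split; reflexivity.
  - destruct (Nat.le_gt_cases k (len e)) as [le_k' | gt_k].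
    + rewrite vtx_evS in vtx_k by lia; rewrite vtx_evS by lia; eauto.
    + replace k with (S (len e)) in * by lia.
      change (S (len e)) with (len (evS e B f)) in vtx_k.
      rewrite vtx_len in vtx_k; subst Y.
      destruct (Nat.eq_dec j (S (len e))) as [-> | ne].
      * exists (ev0 E B); split; [exact (eq_sym (vtx_len (evS e B f))) | simpl; lia].
      * destruct (IH j (len e) ltac:(lia) ltac:(lia) A (vtx_len e)) as (s & init_s & len_s).
        exists (evS s B f); split.
        -- rewrite vtx_evS by lia; exact init_s.
        -- cbn [len]; lia.
Qed.

Lemma evol_graft {A X} (s : evol E X) (p : evol E A) :
  initial s = A -> exists q : evol E X, initial q = initial p /\ len q = len p + len s.
Proof.
  induction s as [B | A' s IH B f]; simpl; intros init_s.
  - subst; exists p; split; [reflexivity | lia].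
  - destruct (IH init_s) as (q & init_q & len_q).
    exists (evS q B f); simpl; split; [assumption | lia].
Qed.

Lemma isotypic_refl A : isotypic E A A.
Proof. split; exists (ev0 E A); reflexivity. Qed.

Lemma is_height_unique {X a b} : is_height E X a -> is_height E X b -> a = b.
Proof.
  intros [(ea & full_a & <-) min_a] [(eb & full_b & <-) min_b].
  specialize (min_a eb full_b); specialize (min_b ea full_a); lia.
Qed.

Lemma full_has_height {X} : (exists e : evol E X, full e) -> exists n, is_height E X n.
Proof.
  intros [e full_e].
  destruct (nat_least_witness (fun n => exists p : evol E X, full p /\ len p = n))
    as (n & witness & least); [now exists (len e), e|].
  exists n; split; [assumption|].
  intros p full_p; apply least; now exists p.
Qed.

(* The evolution s prolongs any full evolution for A to a full evolution for B. *)
Lemma is_height_evol_le {A B} (s : evol E B) {a b} :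
  initial s = A -> is_height E A a -> is_height E B b -> b <= a + len s.
Proof.
  intros init_s [(p & full_p & <-) _] [_ min_b].
  destruct (evol_graft s p init_s) as (q & init_q & <-).
  apply min_b; unfold full; rewrite init_q; exact full_p.
Qed.

Lemma full_vtx_height {X} {e : evol E X} {j} :
  full e -> j <= len e -> exists h, is_height E (vtx e j) h /\ h <= j.
Proof.
  intros full_e le_j.
  destruct (evol_segment e (Nat.le_0_l j) le_j eq_refl) as (s & init_s & len_s).
  assert (full_s : full s) by (unfold full; rewrite init_s, vtx0; exact full_e).
  destruct (full_has_height (ex_intro _ s full_s)) as [h height_h].
  exists h; split; [assumption|].
  rewrite <- (Nat.sub_0_r j), <- len_s; apply height_h, full_s.
Qed.

Lemma full_height_succ_le {X} {e : evol E X} {j a b} :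
  j < len e -> is_height E (vtx e j) a -> is_height E (vtx e (S j)) b -> b <= S a.
Proof.
  intros lt_j height_a height_b.
  destruct (evol_segment e (Nat.le_succ_diag_r j) lt_j eq_refl) as (s & init_s & len_s).
  pose proof (is_height_evol_le s init_s height_a height_b); lia.
Qed.

Lemma minimal_full_vtx_height {X} {e : evol E X} {k} :
  full e -> is_height E X (len e) -> k <= len e -> is_height E (vtx e k) k.
Proof.
  intros full_e height_X le_k.
  destruct (full_vtx_height full_e le_k) as (h & height_h & le_h).
  destruct (evol_segment e le_k (le_n _) (vtx_len e)) as (s & init_s & len_s).
  pose proof (is_height_evol_le s init_s height_h height_X).
  replace k with h at 2 by lia; exact height_h.
Qed.

Lemma critical_ancestor_vtx {X} {e : evol E X} {k n} :
  full e -> k < len e -> is_height E (vtx e k) n -> is_height E (vtx e (S k)) (S n) ->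
  critical_ancestor E (vtx e k) X.
Proof.
  intros full_e lt_k height_k height_Sk.
  exists e, k; split; [assumption | split; [split; [assumption | now exists n] | reflexivity]].
Qed.

Lemma full_height_crossings {X} {e : evol E X} {n} :
  full e -> is_height E X n ->
  exists r : nat -> nat, r n = len e /\
    forall k, k < n -> r k < r (S k) /\ r k < len e /\
      is_height E (vtx e (r k)) k /\ is_height E (vtx e (S (r k))) (S k).
Proof.
  intros full_e height_X.
  set (height_at j := epsilon (inhabits 0) (is_height E (vtx e j))).
  assert (height_at_spec : forall j, j <= len e -> is_height E (vtx e j) (height_at j)).
  { intros j le_j; apply epsilon_spec.
    destruct (full_vtx_height full_e le_j) as (h & height_h & _); now exists h. }
  assert (height_at0 : height_at 0 = 0).
  { destruct (full_vtx_height full_e (Nat.le_0_l (len e))) as (h & height_h & le_h).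
    rewrite (is_height_unique (height_at_spec 0 (Nat.le_0_l _)) height_h); lia. }
  assert (height_at_len : height_at (len e) = n).
  { apply (is_height_unique (height_at_spec _ (le_n _))); now rewrite vtx_len. }
  destruct (last_upcrossings height_at height_at0 height_at_len) as (r & r_n & r_cross).
  { intros j lt_j; apply (full_height_succ_le lt_j); apply height_at_spec; lia. }
  exists r; split; [assumption|].
  intros k lt_k; destruct (r_cross k lt_k) as (lt_r & lt_len & at_r & at_Sr).
  pose proof (height_at_spec (r k) ltac:(lia)) as height_r.
  pose proof (height_at_spec (S (r k)) ltac:(lia)) as height_Sr.
  rewrite at_r in height_r; rewrite at_Sr in height_Sr.
  split; [|split; [|split]]; assumption.
Qed.

Lemma minimal_full_embeds {X} {a b : evol E X} :
  normal E X -> full a -> is_height E X (len a) -> full b -> embeds a b.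
Proof.
  intros normal_X full_a height_a full_b.
  destruct (full_height_crossings full_b height_a) as (r & r_len & r_cross).
  split; [apply height_a, full_b|].
  exists r; split; [|split].
  - intros k lt_k; apply r_cross, lt_k.
  - now rewrite r_len.
  - intros k le_k.
    destruct (Nat.eq_dec k (len a)) as [-> | ne].
    { rewrite r_len, !vtx_len; apply isotypic_refl. }
    destruct (r_cross k ltac:(lia)) as (_ & lt_len & height_r & height_Sr).
    assert (height_k : forall j, j <= len a -> is_height E (vtx a j) j)
      by (intros j; apply minimal_full_vtx_height; assumption).
    apply (normal_X _ _ k); [| | apply height_k; lia | exact height_r].
    + apply (critical_ancestor_vtx (n := k)); [assumption | lia | apply height_k; lia ..].
    + exact (critical_ancestor_vtx full_b lt_len height_r height_Sr).
Qed.

End Quiver.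

Theorem theorem5p1 (V : Type) (E : V -> V -> Type) (X : V) :
  normal E X -> finite_height E X -> phylogenetic E X.
Proof.
  intros normal_X [n height_X].
  pose proof height_X as [(a & full_a & <-) _].
  exists a; split; [exact full_a|].
  intros b full_b; exact (minimal_full_embeds normal_X full_a height_X full_b).
Qed.
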